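(* Let $n_p,n,N$ be positive integers and consider images with $n$ pixels from which $N$ square patches of $n_p$ pixels are extracted with unit stride and periodic boundary conditions (so every pixel belongs to exactly $n_p$ patches and $\sum_{i=1}^N\mathbf{P}_i^T\mathbf{P}_i=n_p\mathbf{I}$), where $\mathbf{P}_i\in\{0,1\}^{n_p\times n}$ is the binary matrix extracting the $i$-th patch. Let $\mathbf{C}_1,\dots,\mathbf{C}_K\in\mathbb{R}^{n_p\times n_p}$ be symmetric positive semi-definite matrices, let $\sigma^2>0$, and for each patch $i$ let $\beta_1^i,\dots,\beta_K^i\ge 0$ with $\sum_{j=1}^K\beta_j^i=1$. Define $$\mathbf{F}_i=\sum_{j=1}^K\beta_j^i\,\mathbf{C}_j(\mathbf{C}_j+\sigma^2\mathbf{I})^{-1},\qquad \mathbf{W}=\frac1{n_p}\sum_{i=1}^N\mathbf{P}_i^T\mathbf{F}_i\mathbf{P}_i.$$ Then $\mathbf{W}$ is symmetric, positive semi-definite, and its maximum eigenvalue is no larger than $1$.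
   Context: $\mathbf{W}$ is the linear map implemented by a patch-based Gaussian-mixture MMSE denoiser with fixed (pre-computed) posterior weights $\beta_j^i$: each noisy patch $\mathbf{P}_i\mathbf{y}$ is estimated as $\mathbf{F}_i\mathbf{P}_i\mathbf{y}$, and the patch estimates are put back in place and averaged. *)

From HB Require Import structures.
From mathcomp Require Import all_boot all_order all_algebra.
From mathcomp Require Import reals.
Set Implicit Arguments. Unset Strict Implicit. Unset Printing Implicit Defensive.
Import Order.TTheory GRing.Theory Num.Theory.
Local Open Scope ring_scope.

Definition symmetric_mx (R : realType) (m : nat) (A : 'M[R]_m) : Prop :=
  A^T = A.

Definition psd_mx (R : realType) (m : nat) (A : 'M[R]_m) : Prop :=
  symmetric_mx A /\ forall x : 'cV[R]_m, 0 <= (x^T *m A *m x) 0 0.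

Definition extraction_mx (R : realType) (np n : nat) (P : 'M[R]_(np, n)) : Prop :=
  (forall r c, P r c = 0 \/ P r c = 1) /\
  (forall r, exists! c, P r c = 1) /\
  (forall r1 r2 c, P r1 c = 1 -> P r2 c = 1 -> r1 = r2).

Definition Fmx (R : realType) (np K : nat) (C : 'I_K -> 'M[R]_np)
  (sigma2 : R) (beta : 'I_K -> R) : 'M[R]_np :=
  \sum_(j < K) beta j *: (C j *m invmx (C j + sigma2%:M)).

Definition Wmx (R : realType) (np n N K : nat) (P : 'I_N -> 'M[R]_(np, n))
  (C : 'I_K -> 'M[R]_np) (sigma2 : R) (beta : 'I_N -> 'I_K -> R) : 'M[R]_n :=
  (np%:R)^-1 *: \sum_(i < N) ((P i)^T *m Fmx C sigma2 (beta i) *m P i).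

(* A Wiener filter C (C + s I)^-1, with C positive semi-definite and s > 0, is symmetric and
   lies between 0 and I in the Loewner order: it equals I - s (C + s I)^-1, and both it and
   (C + s I)^-1 have non-negative quadratic forms. Convex combinations preserve this, so every
   F_i does too. Because the patches cover every pixel n_p times, x^T x = 1/n_p sum_i |P_i x|^2,
   and comparing term by term with x^T W x = 1/n_p sum_i (P_i x)^T F_i (P_i x) puts W between 0
   and I as well. A left eigenvector v of W then gives a |v|^2 = v W v^T <= |v|^2. *)

From HB Require Import structures.
From mathcomp Require Import all_boot all_order all_algebra.
From mathcomp Require Import reals.
Import Order.TTheory GRing.Theory Num.Theory.
Local Open Scope ring_scope.

Section QuadraticForms.

Variable R : realType.

Definition qform m (A : 'M[R]_m) (x : 'cV[R]_m) : R := (x^T *m A *m x) 0 0.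
Arguments qform {m}.

Lemma qformD m (A B : 'M[R]_m) x : qform (A + B) x = qform A x + qform B x.
Proof. by rewrite /qform mulmxDr mulmxDl mxE. Qed.

Lemma qformZ m a (A : 'M[R]_m) x : qform (a *: A) x = a * qform A x.
Proof. by rewrite /qform -scalemxAr -scalemxAl mxE. Qed.

Lemma qform_sum m I (r : seq I) (p : pred I) (F : I -> 'M[R]_m) x :
  qform (\sum_(i <- r | p i) F i) x = \sum_(i <- r | p i) qform (F i) x.
Proof.
apply: (big_morph (qform^~ x)) => [A B|]; first exact: qformD.
by rewrite /qform mulmx0 mul0mx mxE.
Qed.

Lemma qform_tr m (A : 'M[R]_m) x : qform A^T x = qform A x.
Proof.
have trE (B : 'M[R]_1) : B 0 0 = B^T 0 0 by rewrite mxE.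
by rewrite /qform trE !trmx_mul !trmxK mulmxA.
Qed.

Lemma qform_conj m k (Q : 'M[R]_(k, m)) (A : 'M[R]_k) x :
  qform (Q^T *m A *m Q) x = qform A (Q *m x).
Proof. by rewrite /qform trmx_mul !mulmxA. Qed.

Lemma qform1 m (x : 'cV[R]_m) : qform 1%:M x = \sum_i x i 0 ^+ 2.
Proof. by rewrite /qform mulmx1 mxE; apply: eq_bigr => i _; rewrite mxE expr2. Qed.

Lemma qform1_ge0 m (x : 'cV[R]_m) : 0 <= qform 1%:M x.
Proof. by rewrite qform1 sumr_ge0 // => i _; rewrite sqr_ge0. Qed.

Lemma qform1_gt0 m (x : 'cV[R]_m) : x != 0 -> 0 < qform 1%:M x.
Proof.
apply: contraNT; rewrite lt_def qform1_ge0 andbT negbK qform1 => /eqP sum_sq0.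
apply/eqP/matrixP => i j; rewrite ord1 mxE.
by apply/eqP; rewrite -sqrf_eq0 (psumr_eq0P (fun k _ => sqr_ge0 (x k 0)) sum_sq0).
Qed.

Lemma psd_qform_ge0 m (A : 'M[R]_m) x : psd_mx A -> 0 <= qform A x.
Proof. by case=> _; apply. Qed.

Lemma qform_gram_ge0 m k (Q : 'M[R]_(k, m)) x : 0 <= qform (Q^T *m Q) x.
Proof. by rewrite -[Q^T]mulmx1 qform_conj qform1_ge0. Qed.

Lemma unitmx_qform_gt0 m (A : 'M[R]_m) :
  (forall x, x != 0 -> 0 < qform A x) -> A \in unitmx.
Proof.
move=> A_pos; rewrite -row_free_unit -kermx_eq0; apply: contraT => ker_nz.
set u := nz_row (kermx A).
have uA0 : u *m A = 0 by apply/sub_kermxP; exact: nz_row_sub.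
have := A_pos u^T; rewrite trmx_eq0 nz_row_eq0 => /(_ ker_nz).
by rewrite /qform trmxK uA0 mul0mx mxE ltxx.
Qed.

Lemma eigenvalue_le1 m (A : 'M[R]_m) a :
  (forall x, qform A x <= qform 1%:M x) -> eigenvalue A a -> a <= 1.
Proof.
move=> A_le1 /eigenvalueP [v vA v_nz]; have := A_le1 v^T.
have -> : qform A v^T = a * qform 1%:M v^T.
  by rewrite /qform trmxK vA -scalemxAl mxE mulmx1.
by rewrite ger_pMl // qform1_gt0 // trmx_eq0.
Qed.

(* [A] lies between 0 and I in the Loewner order; only quadratic forms are compared, so [A]
   need not be symmetric. *)
Definition loewner01 m (A : 'M[R]_m) : Prop :=
  forall x, 0 <= qform A x /\ qform A x <= qform 1%:M x.
Arguments loewner01 {m}.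

Lemma loewner01_convex m K (b : 'I_K -> R) (A : 'I_K -> 'M[R]_m) :
  (forall j, 0 <= b j) -> \sum_j b j = 1 -> (forall j, loewner01 (A j)) ->
  loewner01 (\sum_j b j *: A j).
Proof.
move=> b_ge0 b_sum1 A01 x; rewrite qform_sum; split.
  by apply: sumr_ge0 => j _; rewrite qformZ mulr_ge0 ?(A01 j x).1.
rewrite -[qform 1%:M x]mul1r -{1}b_sum1 mulr_suml.
by apply: ler_sum => j _; rewrite qformZ ler_wpM2l ?(A01 j x).2.
Qed.

Lemma loewner01_average_conj m k N (c : R) (Q : 'I_N -> 'M[R]_(k, m))
    (A : 'I_N -> 'M[R]_k) :
  0 < c -> \sum_i (Q i)^T *m Q i = c *: 1%:M -> (forall i, loewner01 (A i)) ->
  loewner01 (c^-1 *: \sum_i (Q i)^T *m A i *m Q i).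
Proof.
move=> c_gt0 Q_cover A01 x; rewrite qformZ qform_sum.
have -> : qform 1%:M x = c^-1 * \sum_i qform ((Q i)^T *m 1%:M *m Q i) x.
  under eq_bigr do rewrite mulmx1.
  by rewrite -qform_sum Q_cover qformZ mulKf ?gt_eqF.
have c_inv_ge0 : 0 <= c^-1 by rewrite invr_ge0 ltW.
split; first by rewrite mulr_ge0 // sumr_ge0 // => i _; rewrite qform_conj (A01 i _).1.
by rewrite ler_wpM2l // ler_sum // => i _; rewrite !qform_conj (A01 i _).2.
Qed.

End QuadraticForms.

Arguments qform {R m}.
Arguments loewner01 {R m}.

Section WienerFilter.

Variables (R : realType) (m : nat) (C : 'M[R]_m) (s : R).
Hypotheses (C_psd : psd_mx C) (s_gt0 : 0 < s).

Let M := C + s%:M.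
Let s_ge0 : 0 <= s := ltW s_gt0.

Lemma trmx_shift : M^T = M.
Proof. by rewrite /M linearD /= C_psd.1 tr_scalar_mx. Qed.

Lemma qform_shift x : qform M x = qform C x + s * qform 1%:M x.
Proof. by rewrite qformD -qformZ scale_scalar_mx mulr1. Qed.

Lemma qform_shift_ge0 x : 0 <= qform M x.
Proof. by rewrite qform_shift addr_ge0 ?mulr_ge0 ?qform1_ge0 ?psd_qform_ge0. Qed.

Lemma shift_unitmx : M \in unitmx.
Proof.
apply: unitmx_qform_gt0 => x x_nz.
by rewrite qform_shift ltr_wpDl ?psd_qform_ge0 ?mulr_gt0 ?qform1_gt0.
Qed.

Lemma wiener_complement : C *m invmx M = 1%:M - s *: invmx M.
Proof.
by rewrite -{1}(addrK s%:M C) mulmxBl mulmxV ?shift_unitmx // mul_scalar_mx.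
Qed.

Lemma trmx_wiener : (C *m invmx M)^T = C *m invmx M.
Proof.
by rewrite wiener_complement linearB linearZ /= tr_scalar_mx trmx_inv trmx_shift.
Qed.

Lemma qform_invmx_shift z : qform (invmx M) z = qform M (invmx M *m z).
Proof. by rewrite -qform_conj -mulmxA mulmxV ?shift_unitmx // mulmx1 qform_tr. Qed.

(* Writing z = M w, the quadratic form of C M^-1 at z is that of M C = C^T C + s C at w. *)
Lemma qform_wiener_ge0 z : 0 <= qform (C *m invmx M) z.
Proof.
rewrite -(mulKVmx shift_unitmx z) -qform_conj -mulmxA mulmxKV ?shift_unitmx //.
set w := invmx M *m z.
rewrite trmx_shift /M mulmxDl mul_scalar_mx qformD qformZ -{1}C_psd.1.
by rewrite addr_ge0 ?qform_gram_ge0 ?mulr_ge0 ?psd_qform_ge0.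
Qed.

Lemma loewner01_wiener : loewner01 (C *m invmx M).
Proof.
move=> z; split; first exact: qform_wiener_ge0.
rewrite wiener_complement qformD -scaleNr qformZ mulNr qform_invmx_shift gerDl oppr_le0.
by rewrite mulr_ge0 ?qform_shift_ge0.
Qed.

End WienerFilter.

Theorem lemma2 (R : realType) (np n N K : nat)
  (Hnp : (0 < np)%N) (Hn : (0 < n)%N) (HN : (0 < N)%N)
  (P : 'I_N -> 'M[R]_(np, n))
  (HP : forall i, extraction_mx (P i))
  (Hcover : \sum_(i < N) ((P i)^T *m P i) = (np%:R) *: (1%:M : 'M[R]_n))
  (C : 'I_K -> 'M[R]_np) (HC : forall j, psd_mx (C j))
  (sigma2 : R) (Hsigma : 0 < sigma2)
  (beta : 'I_N -> 'I_K -> R)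
  (Hbeta0 : forall i j, 0 <= beta i j)
  (Hbeta1 : forall i, \sum_(j < K) beta i j = 1) :
  let W := Wmx P C sigma2 beta in
  symmetric_mx W /\ psd_mx W /\ (forall a : R, eigenvalue W a -> a <= 1).
Proof.
move=> W.
have trF i : (Fmx C sigma2 (beta i))^T = Fmx C sigma2 (beta i).
  rewrite /Fmx raddf_sum; apply: eq_bigr => j _.
  by rewrite /= linearZ /= trmx_wiener.
have W_sym : symmetric_mx W.
  rewrite /symmetric_mx /W /Wmx linearZ /= raddf_sum; congr (_ *: _).
  by apply: eq_bigr => i _; rewrite /= !trmx_mul trmxK trF mulmxA.
have F01 i : loewner01 (Fmx C sigma2 (beta i)).
  by apply: loewner01_convex => // j; exact: loewner01_wiener.
have W01 : loewner01 W.
  by apply: loewner01_average_conj; rewrite ?ltr0n.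
split=> //; split; first by split=> // x; exact: (W01 x).1.
by move=> a; apply: eigenvalue_le1 => x; exact: (W01 x).2.
Qed.
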